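(* Let $X$ be a normal space and let $\mathfrak{P}$ be realcompactness. Then $\lambda_\mathfrak{P}X=\beta X\setminus\mathrm{cl}_{\beta X}(\upsilon X\setminus X)$.
   Context: All spaces are completely regular Hausdorff. $\beta X$ is the Stone–Čech compactification and $\upsilon X\subseteq\beta X$ the Hewitt realcompactification of $X$. A space is realcompact if it is homeomorphic to a closed subspace of a power of $\mathbb{R}$. $\mathrm{Coz}(X)$ is the set of cozero-sets $X\setminus f^{-1}(0)$, $f:X\to[0,1]$ continuous. For a topological property $\mathfrak{P}$, $\lambda_\mathfrak{P}X=\bigcup\{\mathrm{int}_{\beta X}\mathrm{cl}_{\beta X}C: C\in\mathrm{Coz}(X),\ \mathrm{cl}_XC\text{ has }\mathfrak{P}\}$. *)

From Stdlib Require Import Reals List.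
Open Scope R_scope.

Definition is_topology {T : Type} (op : (T -> Prop) -> Prop) : Prop :=
  op (fun _ => True) /\ op (fun _ => False) /\
  (forall U V, op U -> op V -> op (fun x => U x /\ V x)) /\
  (forall F : (T -> Prop) -> Prop, (forall U, F U -> op U) ->
     op (fun x => exists U, F U /\ U x)).

Definition closed {T : Type} (op : (T -> Prop) -> Prop) (A : T -> Prop) : Prop :=
  op (fun x => ~ A x).

Definition closure {T : Type} (op : (T -> Prop) -> Prop) (A : T -> Prop) : T -> Prop :=
  fun x => forall U, op U -> U x -> exists y, U y /\ A y.

Definition interior {T : Type} (op : (T -> Prop) -> Prop) (A : T -> Prop) : T -> Prop :=
  fun x => exists U, op U /\ U x /\ forall y, U y -> A y.

Definition R_open (U : R -> Prop) : Prop :=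
  forall x, U x -> exists eps, 0 < eps /\ forall y, Rabs (y - x) < eps -> U y.

Definition continuous {X Y : Type} (opX : (X -> Prop) -> Prop)
  (opY : (Y -> Prop) -> Prop) (f : X -> Y) : Prop :=
  forall V, opY V -> opX (fun x => V (f x)).

Definition continuous_R {X : Type} (opX : (X -> Prop) -> Prop) (f : X -> R) : Prop :=
  continuous opX R_open f.

Definition subspace_open {T : Type} (op : (T -> Prop) -> Prop) (A : T -> Prop)
  : ({x : T | A x} -> Prop) -> Prop :=
  fun V => forall y, V y -> exists U, op U /\ U (proj1_sig y) /\
             forall z : {x : T | A x}, U (proj1_sig z) -> V z.

Definition product_open (I : Type) : ((I -> R) -> Prop) -> Prop :=
  fun W => forall x, W x -> exists (l : list I) (eps : R), 0 < eps /\
             forall y, (forall i, In i l -> Rabs (y i - x i) < eps) -> W y.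

Definition embedding {X Y : Type} (opX : (X -> Prop) -> Prop)
  (opY : (Y -> Prop) -> Prop) (h : X -> Y) : Prop :=
  (forall x y, h x = h y -> x = y) /\ continuous opX opY h /\
  (forall U, opX U -> exists W, opY W /\ forall x, U x <-> W (h x)).

Definition realcompact {T : Type} (op : (T -> Prop) -> Prop) : Prop :=
  exists (I : Type) (h : T -> (I -> R)),
    embedding op (product_open I) h /\
    closed (product_open I) (fun y => exists x, h x = y).

Definition hausdorff {T : Type} (op : (T -> Prop) -> Prop) : Prop :=
  forall x y : T, x <> y -> exists U V, op U /\ op V /\ U x /\ V y /\
    forall z, ~ (U z /\ V z).

Definition completely_regular {T : Type} (op : (T -> Prop) -> Prop) : Prop :=
  forall (A : T -> Prop) (x : T), closed op A -> ~ A x ->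
    exists f, continuous_R op f /\ (forall y, 0 <= f y <= 1) /\
      f x = 0 /\ forall y, A y -> f y = 1.

Definition normal_space {T : Type} (op : (T -> Prop) -> Prop) : Prop :=
  forall A B : T -> Prop, closed op A -> closed op B ->
    (forall z, ~ (A z /\ B z)) ->
    exists U V, op U /\ op V /\ (forall z, A z -> U z) /\ (forall z, B z -> V z) /\
      forall z, ~ (U z /\ V z).

Definition compact {T : Type} (op : (T -> Prop) -> Prop) : Prop :=
  forall F : (T -> Prop) -> Prop, (forall U, F U -> op U) ->
    (forall x, exists U, F U /\ U x) ->
    exists l : list (T -> Prop), (forall U, In U l -> F U) /\
      forall x, exists U, In U l /\ U x.

Definition stone_cech {X K : Type} (opX : (X -> Prop) -> Prop)
  (opK : (K -> Prop) -> Prop) (e : X -> K) : Prop :=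
  is_topology opK /\ compact opK /\ hausdorff opK /\ embedding opX opK e /\
  (forall p, closure opK (fun q => exists x, e x = q) p) /\
  (forall f, continuous_R opX f -> (exists M, forall x, Rabs (f x) <= M) ->
     exists g, continuous_R opK g /\ forall x, g (e x) = f x).

Definition cozero {X : Type} (opX : (X -> Prop) -> Prop) (C : X -> Prop) : Prop :=
  exists f, continuous_R opX f /\ (forall x, 0 <= f x <= 1) /\
    forall x, C x <-> f x <> 0.

(* Hewitt realcompactification inside beta X: the points p of beta X such that
   every zero-set of beta X containing p meets X. *)
Definition upsilon {X K : Type} (opX : (X -> Prop) -> Prop)
  (opK : (K -> Prop) -> Prop) (e : X -> K) : K -> Prop :=
  fun p => forall g, continuous_R opK g -> g p = 0 -> exists x, g (e x) = 0.

Definition lambdaP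
  (P : forall T : Type, ((T -> Prop) -> Prop) -> Prop)
  {X K : Type} (opX : (X -> Prop) -> Prop) (opK : (K -> Prop) -> Prop)
  (e : X -> K) : K -> Prop :=
  fun p => exists C : X -> Prop, cozero opX C /\
    P {x : X | closure opX C x} (subspace_open opX (closure opX C)) /\
    interior opK (closure opK (fun q => exists x, C x /\ e x = q)) p.

Definition realcompactP : forall T : Type, ((T -> Prop) -> Prop) -> Prop :=
  fun T op => realcompact op.

(* Call a closed set D of X tame if every point of υX in cl_βX D lies in X.
   Tame sets are realcompact: D embeds in R^I (I = C(D)) by evaluation, and a
   point y of the closure of its image has, by compactness of βX, a cluster
   point q of D along which the coordinates of y are approached; an unbounded
   function 1/g shows q ∈ υX, so q ∈ X, and then y is the image of q.
   Conversely, if D is realcompact via h : D → R^I and q ∈ υX lies in an open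
   set O of βX with O ∩ X ⊆ D, cut the squashed coordinates of h off by a bump
   at q (from Urysohn's lemma in the normal space X) and extend them to βX;
   since q ∈ υX their values at q stay in (-1, 1), so unsquashed they give a
   point of the closure of h(D), hence some h(x), and the embedding forces
   q = x.  For the theorem: if p has a neighbourhood missing υX \ X, a bump at
   p yields a cozero set C with p ∈ int cl_βX C and cl_X C tame; if
   p ∈ int cl_βX C with cl_X C realcompact, that interior misses υX \ X. *)

From Stdlib Require Import Reals List Lra Lia Wf_nat Classical ClassicalEpsilon
  FunctionalExtensionality PropExtensionality ProofIrrelevance.
Open Scope R_scope.

Lemma pred_ext {T} (P Q : T -> Prop) : (forall x, P x <-> Q x) -> P = Q.
Proof.
  intros H; apply functional_extensionality; intros x.
  apply propositional_extensionality; auto.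
Qed.

Section Topology.
Variables (T : Type) (op : (T -> Prop) -> Prop).
Hypothesis Htop : is_topology op.

Lemma open_full : op (fun _ => True).
Proof. apply Htop. Qed.

Lemma open_inter U V : op U -> op V -> op (fun x => U x /\ V x).
Proof. apply Htop. Qed.

Lemma open_locally (P : T -> Prop) :
  (forall x, P x -> exists W, op W /\ W x /\ forall y, W y -> P y) -> op P.
Proof.
  intros H.
  assert (E : P = fun x => exists U, (op U /\ forall y, U y -> P y) /\ U x).
  { apply pred_ext; intros x; split.
    - intros Px; destruct (H x Px) as [W [HW [Wx Hs]]]; exists W; auto.
    - intros [U [[_ HU] Ux]]; auto. }
  rewrite E; apply Htop; tauto.
Qed.

Lemma open_nbhd_forall_list {J} (Q : J -> T -> Prop) x (l : list J) :
  (forall i, In i l -> exists U, op U /\ U x /\ forall y, U y -> Q i y) ->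
  exists U, op U /\ U x /\ forall y, U y -> forall i, In i l -> Q i y.
Proof.
  induction l as [|i l IH]; intros Hl.
  - exists (fun _ => True); split; [apply open_full | split; [exact I | intros y _ i []]].
  - destruct IH as [U [oU [Ux HU]]]; [intros j jl; apply Hl; right; auto|].
    destruct (Hl i (or_introl eq_refl)) as [V [oV [Vx HV]]].
    exists (fun y => U y /\ V y); split; [apply open_inter; auto | split; [auto|]].
    intros y [Uy Vy] j [<-|jl]; auto.
Qed.

Lemma open_compl_closure (S : T -> Prop) : op (fun x => ~ closure op S x).
Proof.
  apply open_locally; intros x Hx.
  apply not_all_ex_not in Hx as [U HU].
  apply imply_to_and in HU as [oU HU]; apply imply_to_and in HU as [Ux HU].
  exists U; repeat split; auto.
Qed.

Lemma closed_closure (S : T -> Prop) : closed op (closure op S).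
Proof. apply open_compl_closure. Qed.

Lemma closed_singleton : hausdorff op -> forall t, closed op (fun y => y = t).
Proof.
  intros Hh t; apply open_locally; intros y ny.
  destruct (Hh y t ny) as [U [V [oU [oV [Uy [Vt UV]]]]]].
  exists U; repeat split; auto.
  intros z Uz ->; apply (UV t); auto.
Qed.

End Topology.

Lemma closed_compl {T} (op : (T -> Prop) -> Prop) (U : T -> Prop) :
  op U -> closed op (fun x => ~ U x).
Proof.
  intros HU; unfold closed.
  replace (fun x => ~ ~ U x) with U; auto.
  apply pred_ext; intros x; split; [tauto | apply NNPP].
Qed.

Lemma subset_closure {T} (op : (T -> Prop) -> Prop) (S : T -> Prop) x :
  S x -> closure op S x.
Proof. intros Sx U _ Ux; exists x; auto. Qed.

Lemma closure_mono {T} (op : (T -> Prop) -> Prop) (S S' : T -> Prop) :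
  (forall x, S x -> S' x) -> forall x, closure op S x -> closure op S' x.
Proof. intros H x Hx U oU Ux; destruct (Hx U oU Ux) as [y [Uy Sy]]; eauto. Qed.

Lemma closure_of_closed {T} (op : (T -> Prop) -> Prop) (A : T -> Prop) :
  closed op A -> forall x, closure op A x -> A x.
Proof.
  intros cA x Hx; apply NNPP; intro nA.
  destruct (Hx _ cA nA) as [y [ny Ay]]; auto.
Qed.

Lemma subspace_is_topology {T} (op : (T -> Prop) -> Prop) (D : T -> Prop) :
  is_topology op -> is_topology (subspace_open op D).
Proof.
  intros Ht; pose proof Ht as [HT [_ [HI _]]]; repeat split.
  - intros y _; exists (fun _ => True); repeat split; auto.
  - intros y [].
  - intros U V oU oV y [Uy Vy].
    destruct (oU y Uy) as [U1 [o1 [h1 H1]]]; destruct (oV y Vy) as [V1 [o2 [h2 H2]]].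
    exists (fun x => U1 x /\ V1 x); split; [apply HI; auto | split; [auto|]].
    intros z [a b]; split; auto.
  - intros F HF' y [U [FU Uy]]; destruct (HF' U FU y Uy) as [U1 [o1 [h1 H1]]].
    exists U1; repeat split; auto; intros z Hz; exists U; auto.
Qed.

Lemma R_open_ball c eps : R_open (fun t => Rabs (t - c) < eps).
Proof.
  intros t Ht; exists (eps - Rabs (t - c)); split; [lra|].
  intros y Hy; split_Rabs; lra.
Qed.

Lemma R_open_gt c : R_open (fun t => c < t).
Proof. intros t Ht; exists (t - c); split; [lra|]; intros y Hy; split_Rabs; lra. Qed.

Lemma R_open_lt c : R_open (fun t => t < c).
Proof. intros t Ht; exists (c - t); split; [lra|]; intros y Hy; split_Rabs; lra. Qed.

Lemma R_open_neq c : R_open (fun t => t <> c).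
Proof.
  intros t Ht; exists (Rabs (t - c)); split.
  - apply Rabs_pos_lt; lra.
  - intros y Hy ->; split_Rabs; lra.
Qed.

Lemma continuity_pt_elim (phi : R -> R) a : continuity_pt phi a ->
  forall eps, 0 < eps -> exists d, 0 < d /\
    forall b, Rabs (b - a) < d -> Rabs (phi b - phi a) < eps.
Proof.
  intros Hphi eps He; destruct (Hphi eps He) as [d [dpos Hd]].
  exists d; split; auto; intros b Hb.
  destruct (Req_dec b a) as [->|ne].
  - rewrite Rminus_diag, Rabs_R0; auto.
  - apply (Hd b); repeat split; auto.
Qed.

Section RealFunctions.
Variables (T : Type) (op : (T -> Prop) -> Prop).
Hypothesis Htop : is_topology op.

Lemma continuous_R_preimage f V : continuous_R op f -> R_open V -> op (fun x => V (f x)).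
Proof. intros Hf HV; apply Hf; auto. Qed.

Lemma continuous_R_intro (f : T -> R) :
  (forall x eps, 0 < eps ->
     exists W, op W /\ W x /\ forall y, W y -> Rabs (f y - f x) < eps) ->
  continuous_R op f.
Proof.
  intros H V HV; apply open_locally; auto; intros x Vfx.
  destruct (HV _ Vfx) as [d [dpos Hd]]; destruct (H x d dpos) as [W [oW [Wx HW]]].
  exists W; repeat split; auto.
Qed.

Lemma continuous_R_elim (f : T -> R) : continuous_R op f ->
  forall x eps, 0 < eps ->
    exists W, op W /\ W x /\ forall y, W y -> Rabs (f y - f x) < eps.
Proof.
  intros Hf x eps He; exists (fun y => Rabs (f y - f x) < eps); repeat split; auto.
  - apply (continuous_R_preimage f (fun t => Rabs (t - f x) < eps)); auto.
    apply R_open_ball.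
  - rewrite Rminus_diag, Rabs_R0; auto.
Qed.

Lemma continuous_R_const c : continuous_R op (fun _ => c).
Proof.
  apply continuous_R_intro; intros x eps He.
  exists (fun _ => True); repeat split; auto; [apply open_full; auto|].
  intros; rewrite Rminus_diag, Rabs_R0; auto.
Qed.

Lemma continuous_R_comp_pt (g : T -> R) (phi : R -> R) :
  continuous_R op g -> (forall x, continuity_pt phi (g x)) ->
  continuous_R op (fun x => phi (g x)).
Proof.
  intros Hg Hphi; apply continuous_R_intro; intros x eps He.
  destruct (continuity_pt_elim phi (g x) (Hphi x) eps He) as [d [dpos Hd]].
  destruct (continuous_R_elim g Hg x d dpos) as [W [oW [Wx HW]]].
  exists W; repeat split; auto.
Qed.

Lemma continuous_R_comp_lipschitz (g : T -> R) (phi : R -> R) L :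
  continuous_R op g -> 0 <= L ->
  (forall a b, Rabs (phi a - phi b) <= L * Rabs (a - b)) ->
  continuous_R op (fun x => phi (g x)).
Proof.
  intros Hg HL Hphi; apply continuous_R_intro; intros x eps He.
  destruct (continuous_R_elim g Hg x (eps / (L + 1))) as [W [oW [Wx HW]]].
  { apply Rdiv_lt_0_compat; lra. }
  exists W; repeat split; auto; intros y Wy.
  specialize (HW y Wy); specialize (Hphi (g y) (g x)).
  assert (L * Rabs (g y - g x) <= L * (eps / (L + 1))) by (apply Rmult_le_compat_l; lra).
  assert (L * (eps / (L + 1)) < eps).
  { apply Rmult_lt_reg_r with (L + 1); [lra|]; field_simplify; lra. }
  lra.
Qed.

End RealFunctions.

Lemma continuous_R_comp {X Y} (opX : (X -> Prop) -> Prop) (opY : (Y -> Prop) -> Prop)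
  (e : X -> Y) g :
  continuous opX opY e -> continuous_R opY g -> continuous_R opX (fun x => g (e x)).
Proof. intros He Hg V HV; apply (He (fun y => V (g y))), Hg; auto. Qed.

Lemma continuous_R_proj1 {X} (opX : (X -> Prop) -> Prop) (D : X -> Prop) f :
  continuous_R opX f -> continuous_R (subspace_open opX D) (fun s => f (proj1_sig s)).
Proof. intros Hf V HV y Vy; exists (fun x => V (f x)); repeat split; auto. Qed.

Lemma continuous_R_subspace_elim {X} (opX : (X -> Prop) -> Prop) (D : X -> Prop)
  (f : {x | D x} -> R) :
  continuous_R (subspace_open opX D) f -> forall s eps, 0 < eps ->
  exists U, opX U /\ U (proj1_sig s) /\
    forall z, U (proj1_sig z) -> Rabs (f z - f s) < eps.
Proof.
  intros Hf s eps He.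
  destruct (continuous_R_elim _ _ f Hf s eps He)
    as [W [oW [Ws HW]]].
  destruct (oW s Ws) as [U [oU [Us HU]]]; exists U; auto.
Qed.

Lemma exists_two_inv_pow2_lt eps : 0 < eps -> exists N, 2 * / 2 ^ N < eps.
Proof.
  intros He.
  destruct (Pow_x_infinity 2 ltac:(rewrite Rabs_right; lra) (3 / eps)) as [N HN].
  specialize (HN N (le_n N)); rewrite Rabs_right in HN by (left; apply pow_lt; lra).
  exists N; assert (0 < 2 ^ N) by (apply pow_lt; lra).
  assert (3 <= eps * 2 ^ N).
  { apply Rge_le, Rmult_le_compat_l with (r := eps) in HN; [|lra].
    unfold Rdiv in HN; rewrite (Rmult_comm 3), <- Rmult_assoc, Rinv_r in HN; lra. }
  apply Rmult_lt_reg_r with (2 ^ N); auto.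
  rewrite Rmult_assoc, Rinv_l; lra.
Qed.

Section Urysohn.
Variables (T : Type) (op : (T -> Prop) -> Prop).
Hypothesis Htop : is_topology op.
Hypothesis Hnorm : normal_space op.

Lemma normal_shrink A U : closed op A -> op U -> (forall x, A x -> U x) ->
  exists V, op V /\ (forall x, A x -> V x) /\ (forall x, closure op V x -> U x).
Proof.
  intros cA oU AU.
  destruct (Hnorm A (fun x => ~ U x) cA (closed_compl op U oU))
    as [V [W [oV [oW [AV [UW VW]]]]]].
  { intros z [Az Uz]; auto. }
  exists V; repeat split; auto; intros x Hx; apply NNPP; intro nU.
  destruct (Hx W oW (UW x nU)) as [y [Wy Vy]]; apply (VW y); auto.
Qed.

Definition between (V W : T -> Prop) : T -> Prop :=
  match excluded_middle_informative (exists M, op M /\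
      (forall x, closure op V x -> M x) /\ (forall x, closure op M x -> W x)) with
  | left H => proj1_sig (constructive_indefinite_description _ H)
  | right _ => W
  end.

Lemma between_spec V W : op W -> (forall x, closure op V x -> W x) ->
  op (between V W) /\ (forall x, closure op V x -> between V W x) /\
  (forall x, closure op (between V W) x -> W x).
Proof.
  intros oW HVW; unfold between; destruct excluded_middle_informative as [H|H].
  - destruct (constructive_indefinite_description _ H) as [M HM]; auto.
  - exfalso; apply H, normal_shrink; auto; apply closed_closure; auto.
Qed.

Variables (V0 W1 : T -> Prop).
Hypothesis oV0 : op V0.
Hypothesis oW1 : op W1.
Hypothesis V0W1 : forall x, closure op V0 x -> W1 x.

(* [chain n k] is the open set attached to the dyadic k / 2^n: level n+1 keeps
   the sets of level n at even indices and inserts [between] sets at odd ones. *)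
Fixpoint chain (n : nat) : nat -> T -> Prop :=
  match n with
  | O => fun k => match k with O => V0 | _ => W1 end
  | S n' => fun k => if Nat.even k then chain n' (Nat.div2 k)
                     else between (chain n' (Nat.div2 k)) (chain n' (S (Nat.div2 k)))
  end.

Lemma chain_S n k : chain (S n) k = if Nat.even k then chain n (Nat.div2 k)
  else between (chain n (Nat.div2 k)) (chain n (S (Nat.div2 k))).
Proof. reflexivity. Qed.

Lemma chain_even n j : chain (S n) (2 * j) = chain n j.
Proof. rewrite chain_S, Nat.even_even, Nat.div2_double; auto. Qed.

Lemma chain_odd n j : chain (S n) (S (2 * j)) = between (chain n j) (chain n (S j)).
Proof.
  rewrite chain_S; replace (S (2 * j)) with (2 * j + 1)%nat by lia.
  rewrite Nat.even_odd, Nat.div2_odd'; auto.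
Qed.

Lemma chain_spec n : (forall k, (k <= 2 ^ n)%nat -> op (chain n k)) /\
  (forall k, (k < 2 ^ n)%nat -> forall x, closure op (chain n k) x -> chain n (S k) x).
Proof.
  induction n as [|n [IH1 IH2]].
  - split.
    + intros [|[|k]] Hk; simpl in *; auto; lia.
    + intros k Hk; replace k with 0%nat by (simpl in Hk; lia); auto.
  - assert (Hb : forall j, (j < 2 ^ n)%nat ->
      op (between (chain n j) (chain n (S j))) /\
      (forall x, closure op (chain n j) x -> between (chain n j) (chain n (S j)) x) /\
      (forall x, closure op (between (chain n j) (chain n (S j))) x -> chain n (S j) x)).
    { intros j Hj; apply between_spec; [apply IH1 | apply IH2]; lia. }
    rewrite Nat.pow_succ_r'; split; intros k Hk;
      destruct (Nat.Even_or_Odd k) as [[j ->]|[j ->]];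
      try replace (2 * j + 1)%nat with (S (2 * j)) by lia.
    + rewrite chain_even; apply IH1; lia.
    + rewrite chain_odd; apply Hb; lia.
    + rewrite chain_even, chain_odd; apply Hb; lia.
    + rewrite chain_odd; replace (S (S (2 * j))) with (2 * S j)%nat by lia.
      rewrite chain_even; apply Hb; lia.
Qed.

Definition level n k : T -> Prop :=
  if Nat.leb k (2 ^ n) then chain n k else fun _ => True.

Lemma level_open n k : op (level n k).
Proof.
  unfold level; destruct (Nat.leb_spec k (2 ^ n)).
  - apply chain_spec; auto.
  - apply open_full; auto.
Qed.

Lemma level_closure n k x : closure op (level n k) x -> level n (S k) x.
Proof.
  unfold level; destruct (Nat.leb_spec (S k) (2 ^ n)); auto.
  destruct (Nat.leb_spec k (2 ^ n)); [apply chain_spec | ]; lia.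
Qed.

Lemma level_mono n k j x : (k <= j)%nat -> level n k x -> level n j x.
Proof.
  induction 1; auto; intros Hx; apply level_closure, subset_closure; auto.
Qed.

Lemma level_refine n m k : level n k = level (n + m) (k * 2 ^ m).
Proof.
  induction m as [|m IH].
  - rewrite Nat.add_0_r, Nat.mul_1_r; auto.
  - rewrite IH, Nat.add_succ_r; unfold level.
    replace (k * 2 ^ S m)%nat with (2 * (k * 2 ^ m))%nat by (simpl; lia).
    rewrite chain_even, Nat.pow_succ_r'.
    destruct (Nat.leb_spec (2 * (k * 2 ^ m)) (2 * 2 ^ (n + m)));
      destruct (Nat.leb_spec (k * 2 ^ m) (2 ^ (n + m))); auto; lia.
Qed.

Lemma level_dyadic_mono n k m j x :
  INR k / 2 ^ n <= INR j / 2 ^ m -> level n k x -> level m j x.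
Proof.
  intros H Hx; rewrite (level_refine n m k) in Hx; rewrite (level_refine m n j).
  rewrite Nat.add_comm; apply level_mono with (k * 2 ^ m)%nat; auto.
  apply INR_le; rewrite !mult_INR, !pow_INR; simpl (INR 2).
  assert (0 < 2 ^ n) by (apply pow_lt; lra); assert (0 < 2 ^ m) by (apply pow_lt; lra).
  replace (1 + 1) with 2 by ring.
  apply Rmult_le_compat_r with (r := 2 ^ n * 2 ^ m) in H; [|nra].
  unfold Rdiv in H; field_simplify in H; lra.
Qed.

(* The Urysohn function is the supremum of the dyadics [k / 2^n] whose level
   misses [x]. *)
Definition dyadic_below (x : T) (r : R) : Prop :=
  r = 0 \/ exists n k, r = INR k / 2 ^ n /\ ~ level n k x.

Lemma dyadic_below_le_1 x r : dyadic_below x r -> r <= 1.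
Proof.
  intros [->|[n [k [-> Hk]]]]; [lra|].
  assert (Hkn : (k <= 2 ^ n)%nat).
  { unfold level in Hk; destruct (Nat.leb_spec k (2 ^ n)); tauto. }
  apply le_INR in Hkn; rewrite pow_INR in Hkn; simpl (INR 2) in Hkn.
  replace (1 + 1) with 2 in Hkn by ring.
  assert (0 < 2 ^ n) by (apply pow_lt; lra).
  apply Rmult_le_reg_r with (2 ^ n); auto; field_simplify; lra.
Qed.

Definition urysohn_fun (x : T) : R :=
  proj1_sig (completeness (dyadic_below x) (ex_intro _ 1 (dyadic_below_le_1 x))
               (ex_intro _ 0 (or_introl eq_refl))).

Lemma urysohn_fun_lub x : is_lub (dyadic_below x) (urysohn_fun x).
Proof. unfold urysohn_fun; destruct completeness; auto. Qed.

Lemma urysohn_fun_range x : 0 <= urysohn_fun x <= 1.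
Proof.
  destruct (urysohn_fun_lub x) as [H1 H2]; split.
  - apply H1; left; auto.
  - apply H2; intros r; apply dyadic_below_le_1.
Qed.

Lemma urysohn_fun_le n k x : level n k x -> urysohn_fun x <= INR k / 2 ^ n.
Proof.
  intros Hx; apply (urysohn_fun_lub x); intros r [->|[m [j [-> Hj]]]].
  - apply Rmult_le_pos; [apply pos_INR | left; apply Rinv_0_lt_compat, pow_lt; lra].
  - destruct (Rle_or_lt (INR j / 2 ^ m) (INR k / 2 ^ n)) as [h|h]; auto.
    exfalso; apply Hj, level_dyadic_mono with n k; auto; lra.
Qed.

Lemma urysohn_fun_ge n k x : ~ level n k x -> INR k / 2 ^ n <= urysohn_fun x.
Proof. intros Hx; apply (urysohn_fun_lub x); right; exists n, k; auto. Qed.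

Lemma urysohn_fun_continuous : continuous_R op urysohn_fun.
Proof.
  apply continuous_R_intro; auto; intros x eps He.
  destruct (exists_two_inv_pow2_lt eps He) as [N Ht]; set (t := / 2 ^ N) in Ht.
  assert (t0 : 0 < t) by (apply Rinv_0_lt_compat, pow_lt; lra).
  assert (E : forall k, INR k / 2 ^ N = INR k * t) by reflexivity.
  destruct (dec_inh_nat_subset_has_unique_least_element (fun m => level N m x)
              (fun m => classic _)) as [m [[Hm Hmin] _]].
  { exists (S (2 ^ N)); unfold level; destruct (Nat.leb_spec (S (2 ^ N)) (2 ^ N)); auto; lia. }
  pose proof (urysohn_fun_le N m x Hm) as up1; rewrite E in up1.
  pose proof (urysohn_fun_range x).
  destruct (Nat.lt_ge_cases m 2) as [Hm2|Hm2].
  - exists (level N m); repeat split; auto; [apply level_open|].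
    intros y Hy; pose proof (urysohn_fun_le N m y Hy) as up2; rewrite E in up2.
    pose proof (urysohn_fun_range y).
    assert (INR m <= 1) by (replace 1 with (INR 1) by auto; apply le_INR; lia).
    assert (INR m * t <= t) by nra.
    split_Rabs; lra.
  - exists (fun y => level N m y /\ ~ closure op (level N (m - 2)) y); split.
    { apply open_inter; auto; [apply level_open | apply open_compl_closure; auto]. }
    assert (low1 : INR (m - 1) * t <= urysohn_fun x).
    { rewrite <- E; apply urysohn_fun_ge; intro Hl; specialize (Hmin _ Hl); lia. }
    rewrite minus_INR in low1 by lia; simpl (INR 1) in low1.
    split.
    + split; auto; intros Hc; apply level_closure in Hc.
      replace (S (m - 2)) with (m - 1)%nat in Hc by lia; specialize (Hmin _ Hc); lia.
    + intros y [Hy Hy2]; pose proof (urysohn_fun_le N m y Hy) as up2; rewrite E in up2.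
      assert (low2 : INR (m - 2) * t <= urysohn_fun y).
      { rewrite <- E; apply urysohn_fun_ge; intro; apply Hy2, subset_closure; auto. }
      rewrite minus_INR in low2 by lia; simpl (INR 2) in low2.
      split_Rabs; nra.
Qed.

End Urysohn.

Theorem urysohn {T} (op : (T -> Prop) -> Prop) : is_topology op -> normal_space op ->
  forall A B, closed op A -> closed op B -> (forall z, ~ (A z /\ B z)) ->
  exists f, continuous_R op f /\ (forall x, 0 <= f x <= 1) /\
    (forall x, A x -> f x = 0) /\ (forall x, B x -> f x = 1).
Proof.
  intros Ht Hn A B cA cB AB.
  destruct (normal_shrink T op Hn A (fun x => ~ B x) cA cB) as [V0 [oV [AV VW]]].
  { intros x Ax Bx; apply (AB x); auto. }
  exists (urysohn_fun T op V0 (fun x => ~ B x)); repeat split.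
  - apply urysohn_fun_continuous; auto.
  - apply urysohn_fun_range.
  - apply urysohn_fun_range.
  - intros x Ax; pose proof (urysohn_fun_range T op V0 (fun x => ~ B x) x).
    pose proof (urysohn_fun_le T op Ht Hn V0 _ oV cB VW 0 0 x (AV x Ax)); simpl in *; lra.
  - intros x Bx; pose proof (urysohn_fun_range T op V0 (fun x => ~ B x) x).
    assert (Hl : ~ level T op V0 (fun x => ~ B x) 0 1 x) by (unfold level; simpl; auto).
    pose proof (urysohn_fun_ge T op V0 _ 0 1 x Hl); simpl in *; lra.
Qed.

Section StoneCech.
Variables (X K : Type) (opX : (X -> Prop) -> Prop) (opK : (K -> Prop) -> Prop) (e : X -> K).
Hypothesis Hsc : stone_cech opX opK e.

Lemma beta_topology : is_topology opK. Proof. apply Hsc. Qed.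
Lemma beta_compact : compact opK. Proof. apply Hsc. Qed.
Lemma beta_hausdorff : hausdorff opK. Proof. apply Hsc. Qed.
Lemma beta_embedding : embedding opX opK e. Proof. apply Hsc. Qed.
Lemma beta_continuous : continuous opX opK e. Proof. apply Hsc. Qed.

Lemma beta_extension f : continuous_R opX f -> (exists M, forall x, Rabs (f x) <= M) ->
  exists g, continuous_R opK g /\ forall x, g (e x) = f x.
Proof. apply Hsc. Qed.

Lemma beta_open_meets W p : opK W -> W p -> exists x, W (e x).
Proof.
  intros oW Wp; destruct Hsc as [_ [_ [_ [_ [Hd _]]]]].
  destruct (Hd p W oW Wp) as [q [Wq [x <-]]]; eauto.
Qed.

Lemma closure_beta_trace (S : X -> Prop) x :
  closure opK (fun q => exists y, S y /\ e y = q) (e x) -> closure opX S x.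
Proof.
  intros H U oU Ux; destruct beta_embedding as [_ [_ Hopen]].
  destruct (Hopen U oU) as [W [oW HW]].
  destruct (H W oW) as [q [Wq [y [Sy <-]]]]; [apply HW; auto|].
  exists y; split; auto; apply HW; auto.
Qed.

Lemma beta_ext_le G H : continuous_R opK G -> continuous_R opK H ->
  (forall x, G (e x) <= H (e x)) -> forall k, G k <= H k.
Proof.
  intros cG cH Hle k; apply Rnot_lt_le; intros Hlt.
  set (c := (G k + H k) / 2).
  destruct (beta_open_meets (fun z => c < G z /\ H z < c) k) as [x [h1 h2]].
  { apply open_inter; [apply beta_topology | |].
    - apply (continuous_R_preimage _ _ G (fun t => c < t)); auto; apply R_open_gt.
    - apply (continuous_R_preimage _ _ H (fun t => t < c)); auto; apply R_open_lt. }
  { unfold c; split; lra. }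
  specialize (Hle x); lra.
Qed.

Lemma beta_regular A q : closed opK A -> ~ A q ->
  exists U V, opK U /\ opK V /\ U q /\ (forall z, A z -> V z) /\ forall z, ~ (U z /\ V z).
Proof.
  intros cA nAq.
  set (G := fun W : K -> Prop => exists U, opK U /\ U q /\ forall z, ~ (U z /\ W z)).
  set (F := fun W : K -> Prop => opK W /\ (W = (fun z => ~ A z) \/ G W)).
  destruct (beta_compact F) as [l [Hl Hcov]]; [intros U [h _]; auto| |].
  { intros k; destruct (classic (A k)) as [Ak|nAk].
    - assert (ne : q <> k) by (intro; subst; auto).
      destruct (beta_hausdorff q k ne) as [U [V [oU [oV [Uq [Vk UV]]]]]].
      exists V; repeat split; auto; right; exists U; auto.
    - exists (fun z => ~ A z); repeat split; auto. }
  destruct (open_nbhd_forall_list K opK beta_topology (fun W z => G W -> ~ W z) q l)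
    as [U [oU [Uq HU]]].
  { intros W _; destruct (classic (G W)) as [[U [oU [Uq HU]]]|nG].
    - exists U; repeat split; auto; intros z Uz _ Wz; apply (HU z); auto.
    - exists (fun _ => True); repeat split; [apply open_full, beta_topology|]; tauto. }
  exists U, (fun z => exists W, In W l /\ G W /\ W z); repeat split; auto.
  - apply open_locally; [apply beta_topology|]; intros z [W [iW [gW Wz]]].
    exists W; repeat split; [apply (Hl W iW) | auto |]; intros y Wy; exists W; auto.
  - intros z Az; destruct (Hcov z) as [W [iW Wz]]; exists W; repeat split; auto.
    destruct (Hl W iW) as [_ [->|g]]; tauto.
  - intros z [Uz [W [iW [gW Wz]]]]; apply (HU z Uz W iW gW Wz).
Qed.

Lemma beta_shrink O q : opK O -> O q ->
  exists V, opK V /\ V q /\ forall k, closure opK V k -> O k.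
Proof.
  intros oO Oq.
  destruct (beta_regular (fun z => ~ O z) q (closed_compl opK O oO))
    as [U [V [oU [oV [Uq [AV UV]]]]]]; [auto|].
  exists U; repeat split; auto; intros k Hk; apply NNPP; intro nO.
  destruct (Hk V oV (AV k nO)) as [z [Vz Uz]]; apply (UV z); auto.
Qed.

Lemma upsilon_Rabs_lt_1 G q : continuous_R opK G -> (forall x, Rabs (G (e x)) < 1) ->
  upsilon opX opK e q -> Rabs (G q) < 1.
Proof.
  intros cG HG qU.
  assert (Hle : Rabs (G q) <= 1).
  { apply (beta_ext_le (fun z => Rabs (G z)) (fun _ => 1));
      [| apply continuous_R_const, beta_topology | intros x; left; auto].
    apply (continuous_R_comp_lipschitz _ _ beta_topology G Rabs 1); auto; [lra|].
    intros a b; rewrite Rmult_1_l; apply Rabs_triang_inv2. }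
  destruct Hle as [|Heq]; auto; exfalso.
  destruct (qU (fun z => 1 - Rabs (G z))) as [x Hx]; [|lra|].
  - apply (continuous_R_comp_lipschitz _ _ beta_topology G (fun t => 1 - Rabs t) 1); auto; [lra|].
    intros a b; rewrite Rmult_1_l.
    replace (1 - Rabs a - (1 - Rabs b)) with (- (Rabs a - Rabs b)) by ring.
    rewrite Rabs_Ropp; apply Rabs_triang_inv2.
  - specialize (HG x); lra.
Qed.

Hypothesis HtX : is_topology opX.
Hypothesis HnX : normal_space opX.

Lemma beta_bump O q : opK O -> O q -> exists F, continuous_R opK F /\
  (forall k, 0 <= F k <= 1) /\ F q = 1 /\ forall k, F k <> 0 -> O k.
Proof.
  intros oO Oq.
  destruct (beta_shrink O q oO Oq) as [V2 [oV2 [V2q H2]]].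
  destruct (beta_shrink V2 q oV2 V2q) as [V1 [oV1 [V1q H1]]].
  pose proof beta_topology as HtK.
  destruct (urysohn opX HtX HnX (fun x => ~ V2 (e x)) (fun x => closure opK V1 (e x)))
    as [f [cf [rf [fA fB]]]].
  { apply closed_compl, beta_continuous; auto. }
  { apply (beta_continuous (fun k => ~ closure opK V1 k)), open_compl_closure; auto. }
  { intros z [Az Bz]; apply Az, H1; auto. }
  destruct (beta_extension f cf) as [g [cg hg]].
  { exists 1; intros x; specialize (rf x); split_Rabs; lra. }
  exists g; repeat split; auto.
  - apply (beta_ext_le (fun _ => 0) g); auto; [apply continuous_R_const; auto|].
    intros x; rewrite hg; apply rf.
  - apply (beta_ext_le g (fun _ => 1)); auto; [apply continuous_R_const; auto|].
    intros x; rewrite hg; apply rf.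
  - apply NNPP; intro ne.
    destruct (beta_open_meets (fun z => V1 z /\ g z <> 1) q) as [x [h1 h2]]; auto.
    { apply open_inter; auto.
      apply (continuous_R_preimage _ _ g (fun t => t <> 1)); auto; apply R_open_neq. }
    apply h2; rewrite hg; apply fB, subset_closure; auto.
  - intros k gk; apply NNPP; intro nO.
    destruct (beta_open_meets (fun z => ~ closure opK V2 z /\ g z <> 0) k) as [x [h1 h2]].
    { apply open_inter; auto; [apply open_compl_closure; auto|].
      apply (continuous_R_preimage _ _ g (fun t => t <> 0)); auto; apply R_open_neq. }
    { auto. }
    apply h2; rewrite hg; apply fA; intro; apply h1, subset_closure; auto.
Qed.

End StoneCech.

Definition squash (u : R) : R := u / (1 + Rabs u).
Definition unsquash (t : R) : R := t / (1 - Rabs t).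

Lemma Rabs_squash u : Rabs (squash u) = Rabs u / (1 + Rabs u).
Proof.
  unfold squash, Rdiv; rewrite Rabs_mult, Rabs_inv; pose proof (Rabs_pos u).
  rewrite (Rabs_pos_eq (1 + Rabs u)) by lra; auto.
Qed.

Lemma Rabs_squash_lt_1 u : Rabs (squash u) < 1.
Proof.
  rewrite Rabs_squash; pose proof (Rabs_pos u).
  apply Rmult_lt_reg_r with (1 + Rabs u); [lra|]; field_simplify; lra.
Qed.

Lemma unsquash_squash u : unsquash (squash u) = u.
Proof.
  unfold unsquash; rewrite Rabs_squash; unfold squash; pose proof (Rabs_pos u).
  field; lra.
Qed.

Lemma continuity_pt_squash a : continuity_pt squash a.
Proof.
  apply (continuity_pt_div id (fun u => 1 + Rabs u)).
  - apply derivable_continuous_pt, derivable_pt_id.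
  - apply continuity_pt_plus; [apply continuity_pt_const; intros ? ?; auto|].
    apply Rcontinuity_abs.
  - pose proof (Rabs_pos a); lra.
Qed.

Lemma continuity_pt_unsquash t : Rabs t < 1 -> continuity_pt unsquash t.
Proof.
  intros Ht; apply (continuity_pt_div id (fun u => 1 - Rabs u)); [| |lra].
  - apply derivable_continuous_pt, derivable_pt_id.
  - apply continuity_pt_minus; [apply continuity_pt_const; intros ? ?; auto|].
    apply Rcontinuity_abs.
Qed.

Lemma compact_finite_intersection {K J} (opK : (K -> Prop) -> Prop) (A : J -> K -> Prop) :
  is_topology opK -> compact opK ->
  (forall js : list J, exists z, forall j, In j js -> A j z) ->
  exists q, forall j, closure opK (A j) q.
Proof.
  intros HtK HcK Hfip; apply NNPP; intro nq.
  set (F := fun W : K -> Prop => exists j, W = fun k => ~ closure opK (A j) k).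
  destruct (HcK F) as [L [HL Hcov]].
  { intros W [j ->]; apply open_compl_closure; auto. }
  { intros k; apply NNPP; intro nk; apply nq; exists k; intros j; apply NNPP; intro nc.
    apply nk; exists (fun k => ~ closure opK (A j) k); split; [exists j |]; auto. }
  assert (Hjs : forall L', (forall W, In W L' -> F W) ->
            exists js, forall W, In W L' ->
              exists j, In j js /\ W = fun k => ~ closure opK (A j) k).
  { induction L' as [|W L' IH]; intros HL'.
    - exists nil; intros W [].
    - destruct IH as [js Hjs]; [intros; apply HL'; right; auto|].
      destruct (HL' W (or_introl eq_refl)) as [j ->].
      exists (j :: js); intros W [<-|iW]; [exists j; split; [left|]; auto|].
      destruct (Hjs W iW) as [j' [ij' ->]]; exists j'; split; [right|]; auto. }
  destruct (Hjs L HL) as [js Hjs']; destruct (Hfip js) as [z Hz].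
  destruct (Hcov z) as [W [iW Wz]]; destruct (Hjs' W iW) as [j [ij ->]].
  apply Wz, subset_closure, Hz; auto.
Qed.

Lemma product_coordinate_continuous {S I} (opS : (S -> Prop) -> Prop) (h : S -> I -> R) :
  continuous opS (product_open I) h -> forall i, continuous_R opS (fun s => h s i).
Proof.
  intros hc i V HV; apply (hc (fun y => V (y i))).
  intros y Vy; destruct (HV _ Vy) as [d [dpos Hd]]; exists (i :: nil), d; split; auto.
  intros y' Hy'; apply Hd, Hy'; left; auto.
Qed.

Section Evaluation.
Variables (X : Type) (opX : (X -> Prop) -> Prop) (D : X -> Prop).
Hypothesis HtX : is_topology opX.
Hypothesis HhX : hausdorff opX.
Hypothesis HcrX : completely_regular opX.

Definition cfun_index := {f : {x | D x} -> R | continuous_R (subspace_open opX D) f}.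

Definition evaluation (s : {x | D x}) (i : cfun_index) : R := proj1_sig i s.

Definition restrict_index f (cf : continuous_R opX f) : cfun_index :=
  exist _ (fun s => f (proj1_sig s)) (continuous_R_proj1 opX D f cf).

Lemma evaluation_injective s t : evaluation s = evaluation t -> s = t.
Proof.
  intros E; apply NNPP; intro ne.
  assert (ne' : proj1_sig s <> proj1_sig t).
  { intro E'; apply ne; destruct s, t; simpl in E'; subst; f_equal; apply proof_irrelevance. }
  destruct (HcrX (fun y => y = proj1_sig t) (proj1_sig s) (closed_singleton _ _ HtX HhX _) ne')
    as [f [cf [_ [fs ft]]]].
  assert (E2 := f_equal (fun y => y (restrict_index f cf)) E); simpl in E2.
  rewrite fs, (ft _ eq_refl) in E2; lra.
Qed.

Lemma evaluation_continuous : continuous (subspace_open opX D) (product_open cfun_index) evaluation.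
Proof.
  intros W HW s Ws; destruct (HW (evaluation s) Ws) as [l [eps [epos Hbox]]].
  destruct (open_nbhd_forall_list X opX HtX
              (fun i x => forall z, proj1_sig z = x -> Rabs (evaluation z i - evaluation s i) < eps)
              (proj1_sig s) l) as [U [oU [Us HU]]].
  { intros i _; destruct (continuous_R_subspace_elim opX D _ (proj2_sig i) s eps epos)
      as [U [oU [Us HU]]].
    exists U; repeat split; auto; intros x Ux z <-; apply HU; auto. }
  exists U; repeat split; auto; intros z Uz; apply Hbox; intros i il; apply (HU _ Uz); auto.
Qed.

Lemma evaluation_open U : subspace_open opX D U ->
  exists W, product_open cfun_index W /\ forall s, U s <-> W (evaluation s).
Proof.
  intros oU.
  exists (fun y => exists i : cfun_index,
            (forall z, Rabs (proj1_sig i z) < 1 -> U z) /\ Rabs (y i) < 1); split.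
  - intros y [i [Hi yi]]; exists (i :: nil), (1 - Rabs (y i)); split; [lra|].
    intros y' Hy'; exists i; split; auto.
    specialize (Hy' i (or_introl eq_refl)); split_Rabs; lra.
  - intros s; split; [|intros [i [Hi hi]]; auto].
    intros Us; destruct (oU s Us) as [U' [oU' [U's HU']]].
    destruct (HcrX (fun x => ~ U' x) (proj1_sig s) (closed_compl opX U' oU'))
      as [f [cf [_ [fs fA]]]]; [tauto|].
    exists (restrict_index f cf); simpl; split.
    + intros z Hz; apply HU'; apply NNPP; intro nU; rewrite (fA _ nU) in Hz; split_Rabs; lra.
    + unfold evaluation; simpl; rewrite fs, Rabs_R0; lra.
Qed.

Lemma evaluation_embedding :
  embedding (subspace_open opX D) (product_open cfun_index) evaluation.
Proof.
  split; [exact evaluation_injective | split];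
    [exact evaluation_continuous | exact evaluation_open].
Qed.

End Evaluation.

Lemma list_bound_refine {J} (js : list (list J * posreal)) :
  exists l (eps : posreal), forall j, In j js -> (forall i, In i (fst j) -> In i l) /\ eps <= snd j.
Proof.
  induction js as [|[l0 eps0] js [l [eps Hl]]].
  - exists nil, (mkposreal 1 Rlt_0_1); intros j [].
  - exists (l0 ++ l), (mkposreal _ (Rmin_stable_in_posreal eps0 eps)).
    intros j [<-|ij]; simpl.
    + split; [intros i il; apply in_or_app; auto | apply Rmin_l].
    + destruct (Hl j ij) as [H1 H2]; split; [intros i il; apply in_or_app; auto|].
      pose proof (Rmin_r eps0 eps); lra.
Qed.

Section ClosedImage.
Variables (X K : Type) (opX : (X -> Prop) -> Prop) (opK : (K -> Prop) -> Prop) (e : X -> K).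
Hypothesis HtX : is_topology opX.
Hypothesis Hsc : stone_cech opX opK e.
Variable D : X -> Prop.
Variable y : cfun_index X opX D -> R.

Definition in_box l eps (s : {x | D x}) : Prop :=
  forall i, In i l -> Rabs (evaluation X opX D s i - y i) < eps.

Definition box_trace l eps (k : K) : Prop :=
  exists s, in_box l eps s /\ e (proj1_sig s) = k.

Definition box_cluster (q : K) : Prop :=
  forall l eps, 0 < eps -> closure opK (box_trace l eps) q.

Lemma box_cluster_exists : (forall l eps, 0 < eps -> exists s, in_box l eps s) ->
  exists q, box_cluster q.
Proof.
  intros Happrox.
  destruct (compact_finite_intersection opK (fun j : list _ * posreal => box_trace (fst j) (snd j))
              (beta_topology _ _ _ _ _ Hsc) (beta_compact _ _ _ _ _ Hsc)) as [q Hq].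
  - intros js; destruct (list_bound_refine js) as [l [eps Hl]].
    destruct (Happrox l eps (cond_pos eps)) as [s Hs].
    exists (e (proj1_sig s)); intros j ij; exists s; split; auto.
    intros i il; destruct (Hl j ij) as [H1 H2]; specialize (Hs i (H1 i il)); lra.
  - exists q; intros l eps epos; apply (Hq (l, mkposreal eps epos)).
Qed.

Lemma box_cluster_in_closure q : box_cluster q ->
  closure opK (fun k => exists x, D x /\ e x = k) q.
Proof.
  intros Hq; apply (closure_mono opK (box_trace nil 1)); [|apply Hq; lra].
  intros k [s [_ <-]]; exists (proj1_sig s); split; auto; apply (proj2_sig s).
Qed.

(* If q lay outside upsilon X, some g would vanish at q but not on X, and the
   coordinate 1 / g o e would be unbounded near q. *)
Lemma box_cluster_upsilon q : box_cluster q -> upsilon opX opK e q.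
Proof.
  intros Hq g cg gq; apply NNPP; intro nz.
  assert (nz' : forall x, g (e x) <> 0) by (intros x hx; apply nz; eauto).
  assert (ci : continuous_R opX (fun x => / g (e x))).
  { apply (continuous_R_comp_pt _ _ HtX (fun x => g (e x)) (fun t => / t)); auto.
    - apply (continuous_R_comp opX opK e g); auto; apply (beta_continuous _ _ _ _ _ Hsc).
    - intros x; apply (continuity_pt_inv id); [|apply nz'].
      apply derivable_continuous_pt, derivable_pt_id. }
  set (i0 := restrict_index X opX D _ ci).
  set (M := Rabs (y i0) + 1).
  assert (Mpos : 0 < M) by (unfold M; pose proof (Rabs_pos (y i0)); lra).
  destruct (Hq (i0 :: nil) 1 ltac:(lra) (fun k => Rabs (g k - 0) < / M))
    as [k [Nk [s [Hs <-]]]].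
  { apply (continuous_R_preimage _ _ g (fun t => Rabs (t - 0) < / M)); auto.
    apply R_open_ball. }
  { rewrite gq, Rminus_diag, Rabs_R0; apply Rinv_0_lt_compat; auto. }
  specialize (Hs i0 (or_introl eq_refl)); unfold evaluation in Hs; simpl in Hs.
  set (a := g (e (proj1_sig s))) in *; rewrite Rminus_0_r in Nk.
  assert (pa : 0 < Rabs a) by (apply Rabs_pos_lt, nz').
  assert (Hb : Rabs (/ a) < M).
  { unfold M; pose proof (Rabs_triang (/ a - y i0) (y i0)).
    replace (/ a - y i0 + y i0) with (/ a) in H by ring; lra. }
  rewrite Rabs_inv in Hb.
  assert (Rabs a * M < 1).
  { apply Rmult_lt_reg_r with (/ M); [apply Rinv_0_lt_compat; auto|].
    rewrite Rmult_assoc, Rinv_r, Rmult_1_r, Rmult_1_l by lra; auto. }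
  assert (M < / Rabs a).
  { apply Rmult_lt_reg_l with (Rabs a); auto; rewrite Rinv_r by lra; lra. }
  lra.
Qed.

Lemma box_cluster_at_point x0 (d0 : D x0) : box_cluster (e x0) ->
  y = evaluation X opX D (exist D x0 d0).
Proof.
  intros Hq; set (s0 := exist D x0 d0).
  apply functional_extensionality; intros i; apply NNPP; intro Hi.
  set (eps := Rabs (y i - evaluation X opX D s0 i) / 2).
  assert (epos : 0 < eps).
  { unfold eps; assert (0 < Rabs (y i - evaluation X opX D s0 i)) by (apply Rabs_pos_lt; lra).
    lra. }
  destruct (continuous_R_subspace_elim opX D _ (proj2_sig i) s0 eps epos) as [U [oU [Us HU]]].
  destruct (beta_embedding _ _ _ _ _ Hsc) as [_ [_ Hopen]].
  destruct (Hopen U oU) as [W [oW HW]].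
  destruct (Hq (i :: nil) eps epos W oW) as [k [Wk [s [Hs <-]]]]; [apply HW; auto|].
  specialize (Hs i (or_introl eq_refl)).
  assert (Rabs (evaluation X opX D s i - evaluation X opX D s0 i) < eps)
    by (apply HU, HW; auto).
  unfold eps in *; split_Rabs; lra.
Qed.

End ClosedImage.

Theorem realcompact_of_upsilon_trace (X K : Type) (opX : (X -> Prop) -> Prop)
  (opK : (K -> Prop) -> Prop) (e : X -> K) (D : X -> Prop) :
  is_topology opX -> hausdorff opX -> completely_regular opX -> stone_cech opX opK e ->
  closed opX D ->
  (forall q, closure opK (fun k => exists x, D x /\ e x = k) q -> upsilon opX opK e q ->
     exists x, e x = q) ->
  realcompact (subspace_open opX D).
Proof.
  intros HtX HhX HcrX Hsc cD HD.
  exists (cfun_index X opX D), (evaluation X opX D); split.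
  { apply evaluation_embedding; auto. }
  intros y ny; apply NNPP; intro Hn.
  destruct (box_cluster_exists X K opX opK e Hsc D y) as [q Hq].
  { intros l eps epos; apply NNPP; intro ns; apply Hn.
    exists l, eps; split; auto; intros y' Hy' [s <-]; apply ns; exists s; auto. }
  pose proof (box_cluster_in_closure X K opX opK e D y q Hq) as qD.
  destruct (HD q qD) as [x0 <-]; [apply (box_cluster_upsilon X K opX opK e HtX Hsc D y); auto|].
  assert (d0 : D x0).
  { apply (closure_of_closed opX); auto; apply (closure_beta_trace _ _ _ _ _ Hsc); auto. }
  apply ny; exists (exist D x0 d0); symmetry; apply (box_cluster_at_point X K opX opK e Hsc); auto.
Qed.

Section ZeroExtension.
Variables (X : Type) (D : X -> Prop) (phi : {x | D x} -> R).

Definition zero_ext (x : X) : R :=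
  match excluded_middle_informative (D x) with
  | left d => phi (exist D x d)
  | right _ => 0
  end.

Lemma zero_ext_in x (d : D x) : zero_ext x = phi (exist D x d).
Proof.
  unfold zero_ext; destruct excluded_middle_informative as [d'|]; [|contradiction].
  rewrite (proof_irrelevance _ d' d); auto.
Qed.

Lemma zero_ext_out x : ~ D x -> zero_ext x = 0.
Proof. intros nd; unfold zero_ext; destruct excluded_middle_informative; tauto. Qed.

Variable f : X -> R.
Hypothesis Hf01 : forall x, 0 <= f x <= 1.
Hypothesis Hphi1 : forall s, Rabs (phi s) < 1.

Lemma Rabs_zero_ext_lt_1 x : Rabs (zero_ext x) < 1.
Proof.
  destruct (classic (D x)) as [d|nd].
  - rewrite (zero_ext_in x d); auto.
  - rewrite zero_ext_out, Rabs_R0 by auto; lra.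
Qed.

Lemma Rabs_cutoff_le x : Rabs (f x * zero_ext x) <= f x.
Proof.
  pose proof (Hf01 x); pose proof (Rabs_zero_ext_lt_1 x); pose proof (Rabs_pos (zero_ext x)).
  rewrite Rabs_mult, (Rabs_pos_eq (f x)) by lra; nra.
Qed.

Lemma Rabs_cutoff_lt_1 x : Rabs (f x * zero_ext x) < 1.
Proof.
  pose proof (Hf01 x); pose proof (Rabs_zero_ext_lt_1 x); pose proof (Rabs_pos (zero_ext x)).
  rewrite Rabs_mult, (Rabs_pos_eq (f x)) by lra; nra.
Qed.

(* Continuity off [D] holds because there the cutoff [f] is small, continuity
   on [D] because [f <> 0] is an open set inside [D]. *)
Lemma continuous_R_cutoff (opX : (X -> Prop) -> Prop) : is_topology opX -> continuous_R opX f ->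
  (forall x, f x <> 0 -> D x) -> continuous_R (subspace_open opX D) phi ->
  continuous_R opX (fun x => f x * zero_ext x).
Proof.
  intros HtX cf fD cphi; apply continuous_R_intro; auto; intros x eps epos.
  destruct (Req_dec (f x) 0) as [f0|f0].
  - exists (fun y => f y < eps); split.
    { apply (continuous_R_preimage _ _ f (fun t => t < eps)); auto; apply R_open_lt. }
    split; [lra|]; intros y Hy.
    rewrite f0, Rmult_0_l, Rminus_0_r; pose proof (Rabs_cutoff_le y); lra.
  - pose (d := fD x f0).
    destruct (continuous_R_elim _ _ f cf x (eps / 2)) as [W1 [o1 [W1x H1]]]; [lra|].
    destruct (continuous_R_subspace_elim opX D _ cphi (exist D x d) (eps / 2))
      as [U3 [o3 [U3x H3]]]; [lra|].
    exists (fun y => (W1 y /\ f y <> 0) /\ U3 y); split.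
    { apply open_inter; auto; apply open_inter; auto.
      apply (continuous_R_preimage _ _ f (fun t => t <> 0)); auto; apply R_open_neq. }
    split; [repeat split; auto|]; intros y [[W1y fy] U3y].
    pose (dy := fD y fy); rewrite (zero_ext_in y dy), (zero_ext_in x d).
    specialize (H1 y W1y); specialize (H3 (exist D y dy) U3y); simpl in H3.
    pose proof (Hf01 x); pose proof (Hphi1 (exist D y dy)).
    set (b := phi (exist D y dy)) in *; set (b0 := phi (exist D x d)) in *.
    replace (f y * b - f x * b0) with ((f y - f x) * b + f x * (b - b0)) by ring.
    pose proof (Rabs_triang ((f y - f x) * b) (f x * (b - b0))) as Htr.
    rewrite !Rabs_mult, (Rabs_pos_eq (f x)) in Htr by lra.
    pose proof (Rabs_pos (f y - f x)); pose proof (Rabs_pos (b - b0)); nra.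
Qed.

End ZeroExtension.

Section RealcompactTrace.
Variables (X K : Type) (opX : (X -> Prop) -> Prop) (opK : (K -> Prop) -> Prop) (e : X -> K).
Hypothesis HtX : is_topology opX.
Hypothesis Hsc : stone_cech opX opK e.

Variables (D : X -> Prop) (I : Type) (h : {x | D x} -> I -> R).
Hypothesis h_continuous : continuous (subspace_open opX D) (product_open I) h.
Hypothesis h_open : forall U, subspace_open opX D U ->
  exists W, product_open I W /\ forall s, U s <-> W (h s).
Hypothesis h_closed : closed (product_open I) (fun y => exists s, h s = y).

Variables (O : K -> Prop) (q : K).
Hypothesis O_open : opK O.
Hypothesis O_trace : forall x, O (e x) -> D x.
Hypothesis q_upsilon : upsilon opX opK e q.

Variable F : K -> R.
Hypothesis F_continuous : continuous_R opK F.
Hypothesis F_range : forall k, 0 <= F k <= 1.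
Hypothesis F_q : F q = 1.
Hypothesis F_support : forall k, F k <> 0 -> O k.

Let HtK := beta_topology X K opX opK e Hsc.

Lemma F_trace x : F (e x) <> 0 -> D x.
Proof. intros Fx; apply O_trace, F_support; auto. Qed.

Definition coord_cutoff i (x : X) : R :=
  F (e x) * zero_ext X D (fun s => squash (h s i)) x.

Lemma coord_cutoff_continuous i : continuous_R opX (coord_cutoff i).
Proof.
  apply (continuous_R_cutoff X D _ _ (fun x => F_range (e x)) (fun s => Rabs_squash_lt_1 _)
           opX HtX).
  - apply (continuous_R_comp opX opK e F); auto; apply (beta_continuous _ _ _ _ _ Hsc).
  - apply F_trace.
  - apply (continuous_R_comp_pt _ _ (subspace_is_topology _ _ HtX)).
    + apply product_coordinate_continuous; auto.
    + intros; apply continuity_pt_squash.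
Qed.

Lemma Rabs_coord_cutoff_lt_1 i x : Rabs (coord_cutoff i x) < 1.
Proof.
  apply (Rabs_cutoff_lt_1 X D _ _ (fun x => F_range (e x)) (fun s => Rabs_squash_lt_1 _)).
Qed.

Lemma coord_extension_exists i :
  exists g, continuous_R opK g /\ forall x, g (e x) = coord_cutoff i x.
Proof.
  apply (beta_extension _ _ _ _ _ Hsc); [apply coord_cutoff_continuous|].
  exists 1; intros x; left; apply Rabs_coord_cutoff_lt_1.
Qed.

Definition coord_ext i : K -> R :=
  proj1_sig (constructive_indefinite_description _ (coord_extension_exists i)).

Lemma coord_ext_spec i :
  continuous_R opK (coord_ext i) /\ forall x, coord_ext i (e x) = coord_cutoff i x.
Proof. unfold coord_ext; destruct constructive_indefinite_description; auto. Qed.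

Lemma Rabs_coord_ext_q i : Rabs (coord_ext i q) < 1.
Proof.
  apply (upsilon_Rabs_lt_1 _ _ _ _ _ Hsc); auto; [apply coord_ext_spec|].
  intros x; rewrite (proj2 (coord_ext_spec i)); apply Rabs_coord_cutoff_lt_1.
Qed.

(* The point [h x] that [q] would be: squashing makes the coordinates bounded,
   so that they extend to βX, and [unsquash] undoes the squashing at [q]. *)
Definition q_image (i : I) : R := unsquash (coord_ext i q).

Lemma q_image_approx i eps : 0 < eps -> exists N, opK N /\ N q /\
  forall x, N (e x) -> D x /\ forall d : D x, Rabs (h (exist D x d) i - q_image i) < eps.
Proof.
  intros epos; set (t := coord_ext i q); pose proof (coord_ext_spec i) as [cG HG].
  destruct (continuity_pt_elim unsquash t (continuity_pt_unsquash t (Rabs_coord_ext_q i)) eps epos)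
    as [delta [dpos Hdelta]].
  exists (fun z => Rmax 0 (1 - delta / 2) < F z /\ Rabs (coord_ext i z - t) < delta / 2); split.
  { apply open_inter; auto.
    - apply (continuous_R_preimage _ _ F (fun r => Rmax 0 (1 - delta / 2) < r)); auto.
      apply R_open_gt.
    - apply (continuous_R_preimage _ _ (coord_ext i) (fun r => Rabs (r - t) < delta / 2)); auto.
      apply R_open_ball. }
  split; [rewrite F_q, Rminus_diag, Rabs_R0; split; [apply Rmax_lub_lt|]; lra|].
  intros x [h1 h2]; apply Rmax_Rlt in h1; pose proof (F_range (e x)).
  assert (d : D x) by (apply F_trace; intro; lra); split; auto; intros d'.
  rewrite HG in h2; unfold coord_cutoff in h2; rewrite (zero_ext_in X D _ x d') in h2.
  set (a := h (exist D x d') i) in *.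
  rewrite <- (unsquash_squash a); apply Hdelta.
  assert (Rabs (squash a - F (e x) * squash a) <= 1 - F (e x)).
  { replace (squash a - F (e x) * squash a) with ((1 - F (e x)) * squash a) by ring.
    rewrite Rabs_mult, Rabs_pos_eq by lra; pose proof (Rabs_squash_lt_1 a).
    pose proof (Rabs_pos (squash a)); nra. }
  pose proof (Rabs_triang (squash a - F (e x) * squash a) (F (e x) * squash a - t)) as Htr.
  replace (squash a - F (e x) * squash a + (F (e x) * squash a - t)) with (squash a - t)
    in Htr by ring.
  lra.
Qed.

Lemma q_image_box_approx l eps : 0 < eps -> exists N, opK N /\ N q /\
  forall x, N (e x) -> D x /\
    forall d : D x, forall i, In i l -> Rabs (h (exist D x d) i - q_image i) < eps.
Proof.
  intros epos.
  destruct (open_nbhd_forall_list K opK HtK (fun i z => forall x, e x = z -> D x /\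
              forall d : D x, Rabs (h (exist D x d) i - q_image i) < eps) q l)
    as [N [oN [Nq HN]]].
  { intros i _; destruct (q_image_approx i eps epos) as [N [oN [Nq HN]]].
    exists N; split; [auto | split; [auto|]]; intros z Nz x <-; apply HN; auto. }
  exists (fun z => N z /\ F z <> 0); split; [|split; [split; [auto | lra]|]].
  - apply open_inter; auto; apply (continuous_R_preimage _ _ F (fun r => r <> 0)); auto.
    apply R_open_neq.
  - intros x [Nx Fx]; split; [apply F_trace; auto|].
    intros d i il; apply (HN _ Nx i il x eq_refl).
Qed.

Lemma q_image_in_range : exists s, h s = q_image.
Proof.
  apply NNPP; intro ny; destruct (h_closed q_image ny) as [l [eps [epos Hbox]]].
  destruct (q_image_box_approx l eps epos) as [N [oN [Nq HN]]].
  destruct (beta_open_meets _ _ _ _ _ Hsc N q oN Nq) as [x Nx].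
  destruct (HN x Nx) as [d Hd].
  apply (Hbox (h (exist D x d))); [intros i il; apply Hd; auto | eauto].
Qed.

Lemma q_in_range : exists x, e x = q.
Proof.
  apply NNPP; intro qnX; destruct q_image_in_range as [s0 Hs0].
  assert (ne : e (proj1_sig s0) <> q) by (intro E; apply qnX; eauto).
  destruct (beta_hausdorff _ _ _ _ _ Hsc _ _ ne) as [U [V [oU [oV [Us0 [Vq UV]]]]]].
  destruct (h_open (fun s => U (e (proj1_sig s)))) as [W [oW HW]].
  { intros s Us; exists (fun x => U (e x)); repeat split; auto.
    apply (beta_continuous _ _ _ _ _ Hsc); auto. }
  assert (Wy : W q_image) by (rewrite <- Hs0; apply HW; auto).
  destruct (oW q_image Wy) as [l [eps [epos Hbox]]].
  destruct (q_image_box_approx l eps epos) as [N [oN [Nq HN]]].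
  destruct (beta_open_meets _ _ _ _ _ Hsc (fun z => N z /\ V z) q) as [x [Nx Vx]];
    [apply open_inter; auto | auto|].
  destruct (HN x Nx) as [d Hd].
  apply (UV (e x)); split; auto.
  apply (HW (exist D x d)), Hbox; intros i il; apply Hd; auto.
Qed.

End RealcompactTrace.

Lemma upsilon_trace_of_realcompact (X K : Type) (opX : (X -> Prop) -> Prop)
  (opK : (K -> Prop) -> Prop) (e : X -> K) (D : X -> Prop) (O : K -> Prop) q :
  is_topology opX -> normal_space opX -> stone_cech opX opK e ->
  realcompact (subspace_open opX D) ->
  opK O -> (forall x, O (e x) -> D x) -> O q -> upsilon opX opK e q ->
  exists x, e x = q.
Proof.
  intros HtX HnX Hsc [I [h [[_ [hcont hopen]] hclosed]]] oO OD Oq qU.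
  destruct (beta_bump X K opX opK e Hsc HtX HnX O q oO Oq) as [F [cF [rF [Fq FO]]]].
  apply (q_in_range X K opX opK e HtX Hsc D I h hcont hopen hclosed O q OD qU F); auto.
Qed.

Lemma cozero_half_level {X} (opX : (X -> Prop) -> Prop) (f : X -> R) :
  is_topology opX -> continuous_R opX f -> (forall x, f x <= 1) ->
  cozero opX (fun x => 1 / 2 < f x).
Proof.
  intros HtX cf f1; exists (fun x => 2 * Rmax 0 (f x - 1 / 2)); split; [|split].
  - apply (continuous_R_comp_lipschitz _ _ HtX f (fun t => 2 * Rmax 0 (t - 1 / 2)) 2);
      auto; [lra|].
    intros a b; unfold Rmax.
    destruct (Rle_dec 0 (a - 1 / 2)); destruct (Rle_dec 0 (b - 1 / 2)); split_Rabs; lra.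
  - intros x; specialize (f1 x); unfold Rmax; destruct (Rle_dec 0 (f x - 1 / 2)); lra.
  - intros x; unfold Rmax; destruct (Rle_dec 0 (f x - 1 / 2)); split; intros; lra.
Qed.

Lemma lambda_realcompact_of_nbhd (X K : Type) (opX : (X -> Prop) -> Prop)
  (opK : (K -> Prop) -> Prop) (e : X -> K) (U : K -> Prop) p :
  is_topology opX -> hausdorff opX -> completely_regular opX ->
  normal_space opX -> stone_cech opX opK e ->
  opK U -> U p -> (forall q, U q -> upsilon opX opK e q -> exists x, e x = q) ->
  lambdaP realcompactP opX opK e p.
Proof.
  intros HtX HhX HcrX HnX Hsc oU Up HU; pose proof (beta_topology _ _ _ _ _ Hsc) as HtK.
  destruct (beta_bump X K opX opK e Hsc HtX HnX U p oU Up) as [F [cF [rF [Fp FU]]]].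
  assert (Hlt : forall c, opK (fun z => F z < c))
    by (intros c; apply (continuous_R_preimage _ _ F (fun t => t < c)); auto; apply R_open_lt).
  assert (Hgt : forall c, opK (fun z => c < F z))
    by (intros c; apply (continuous_R_preimage _ _ F (fun t => c < t)); auto; apply R_open_gt).
  assert (Hlt_X : forall c, opX (fun x => F (e x) < c))
    by (intros c; apply (beta_continuous _ _ _ _ _ Hsc (fun z => F z < c)); auto).
  exists (fun x => 1 / 2 < F (e x)); split; [|split].
  - apply cozero_half_level; [auto | | intros x; apply rF].
    apply (continuous_R_comp opX opK e F); auto; apply (beta_continuous _ _ _ _ _ Hsc).
  - apply (realcompact_of_upsilon_trace X K opX opK e); auto; [apply closed_closure; auto|].
    intros q Hq qU; apply HU; auto; apply FU; intro F0.
    destruct (Hq _ (Hlt (1 / 2)) ltac:(simpl; lra)) as [k [Fk [x [Cx <-]]]].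
    destruct (Cx _ (Hlt_X (1 / 2)) Fk) as [c [Fc Cc]]; lra.
  - exists (fun z => 1 / 2 < F z); split; [auto | split; [lra|]].
    intros k Fk N oN Nk.
    destruct (beta_open_meets _ _ _ _ _ Hsc (fun z => N z /\ 1 / 2 < F z) k)
      as [x [Nx Fx]]; [apply open_inter; auto | auto |].
    exists (e x); split; auto; exists x; split; auto.
Qed.

Theorem proposition4p31 (X K : Type) (opX : (X -> Prop) -> Prop)
  (opK : (K -> Prop) -> Prop) (e : X -> K) :
  is_topology opX -> hausdorff opX -> completely_regular opX ->
  normal_space opX -> stone_cech opX opK e ->
  forall p : K,
    lambdaP realcompactP opX opK e p <->
    ~ closure opK (fun q => upsilon opX opK e q /\ ~ (exists x, e x = q)) p.
Proof.
  intros HtX HhX HcrX HnX Hsc p; split.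
  - intros [C [_ [Hrc [O [oO [Op HO]]]]]] Hcl.
    destruct (Hcl O oO Op) as [q [Oq [qU qnX]]]; apply qnX.
    apply (upsilon_trace_of_realcompact X K opX opK e (closure opX C) O q); auto.
    intros x Ox; apply (closure_beta_trace _ _ _ _ _ Hsc), HO; auto.
  - intros Hp; apply not_all_ex_not in Hp as [U HU].
    apply imply_to_and in HU as [oU HU]; apply imply_to_and in HU as [Up HU].
    apply (lambda_realcompact_of_nbhd X K opX opK e U); auto.
    intros q Uq qU; apply NNPP; intro nq; apply HU; exists q; auto.
Qed.
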